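(* For $n\ge1$ and $0\le m\le n-1$ let $Z_n(m)$ be the number of $(\underline{i},\underline{k})\in\mathfrak{T}_n$ of weight $m$. Then: (1) $Z_n(m)=\sum_{j=n-m-1}^{n-1}Z_j(m-n+j+1)\,Z_{n-j}(n-j-1)$ for all $0\le m\le n-2$; (2) $Z_n(n-1)=C_{n-1}$; (3) $\sum_{m=0}^{n-1}2^{n-m}Z_n(m)=(n+1)C_n$, where $C_n=\frac1{n+1}\binom{2n}{n}$ is the $n$-th Catalan number.
   Context: $\mathfrak{T}_n$ is the set of pairs $(\underline{i},\underline{k})$ of $p$-tuples of non-negative integers $\underline{i}=(i_1,\dots,i_p)$, $\underline{k}=(k_1,\dots,k_p)$, $0\le p\le n-1$, with $1\le i_1<\dots<i_p\le n-1$ and $1\le i_1-k_1<\dots<i_p-k_p\le n-1$ (the empty pair, $p=0$, is included). The weight of $(\underline{i},\underline{k})$ is $|\bigcup_{j=1}^p\{i_j-k_j,i_j-k_j+1,\dots,i_j\}|$. It is known (Jones) that $|\mathfrak{T}_n|=\sum_{m=0}^{n-1}Z_n(m)=C_n$. *)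

From mathcomp Require Import all_boot.
Set Implicit Arguments. Unset Strict Implicit. Unset Printing Implicit Defensive.

Definition diffs (i k : seq nat) : seq nat := [seq x.1 - x.2 | x <- zip i k].

Definition inT (n : nat) (i k : seq nat) : bool :=
  [&& size i == size k,
      sorted ltn i, all (fun x => 0 < x <= n.-1) i,
      sorted ltn (diffs i k) & all (fun x => 0 < x <= n.-1) (diffs i k)].

Definition weight (i k : seq nat) : nat :=
  size (undup (flatten [seq iota (x.1 - x.2) x.2.+1 | x <- zip i k])).

(* Elements with p entries are
   enumerated as pairs of p-tuples with entries in 'I_n (i_j <= n-1 and
   k_j <= i_j - 1 <= n-2, so no element of T_n is missed), p ranging over 0..n-1. *)
Definition Z (n m : nat) : nat :=
  \sum_(p < n)
    #|[pred t : p.-tuple 'I_n * p.-tuple 'I_n |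
        inT n (map val t.1) (map val t.2) && (weight (map val t.1) (map val t.2) == m)]|.

Definition catalan (n : nat) : nat := 'C(n.*2, n) %/ n.+1.

From mathcomp Require Import all_boot zify.
Set Implicit Arguments. Unset Strict Implicit. Unset Printing Implicit Defensive.

(* An element (i, k) of T_{N+1} is a family of intervals [i_j - k_j, i_j] in
   {1, ..., N} whose left ends and whose right ends are strictly increasing.
   Its code is the word of length N whose letter at x says whether x is a
   left end and whether x is a right end.  Codes are exactly the balanced
   words (matching left and right ends in order, a right end never precedes
   its left end), and x is uncovered iff its letter is read while no interval
   is open and opens none (a free letter).  Hence Z_{N+1}(m) = npath N 0 (N - m),
   the number of balanced words of length N with N - m free letters.

   We first study npath through its first-letter recurrences: splitting at
   the last free letter gives the convolution (1); words without free letter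
   satisfy a ballot-type binomial formula that yields the Catalan numbers (2);
   weighting free letters by 2 gives a sum of two binomials, whence (3). *)

(* A letter (b, c) describes a position x in {1, ..., n-1}: b says that x is
   the left end i_j - k_j of an interval of (i, k), and c that it is a right
   end i_j. *)
Definition letters : seq (bool * bool) :=
  [:: (false, false); (true, false); (false, true); (true, true)].

Fixpoint words (l : nat) : seq (seq (bool * bool)) :=
  if l is l'.+1 then [seq a :: w | a <- letters, w <- words l'] else [:: [::]].

Lemma words_succ l : words l.+1 = [seq a :: w | a <- letters, w <- words l].
Proof. by []. Qed.

Lemma mem_words l w : (w \in words l) = (size w == l).
Proof.
elim: l w => [|l IH] [|a w] //; rewrite words_succ.
  by apply/negbTE/allpairsP => -[[b v] [_ _]].
rewrite eqSS -IH; apply/allpairsP/idP => [[[b v] /= [_ Hv [_ ->]]] // | Hw].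
by exists (a, w); split => //; case: a => [[] []].
Qed.

Lemma uniq_words l : uniq (words l).
Proof.
elim: l => [|l IH] //; rewrite words_succ.
by apply: allpairs_uniq => // [[a w] [b v]] _ _ /= [-> ->].
Qed.

(* Read from height h (the number of open intervals), a letter (b, c) opens b
   intervals and then closes c; a word is balanced when nothing is closed
   while no interval is open and everything is closed at the end. *)
Fixpoint balanced (h : nat) (w : seq (bool * bool)) : bool :=
  if w is a :: w' then (a.2 <= h + a.1) && balanced (h + a.1 - a.2) w'
  else h == 0.

(* The free letters: those read at height 0 that open nothing, i.e. the
   positions covered by no interval. *)
Fixpoint free (h : nat) (w : seq (bool * bool)) : nat :=
  if w is a :: w' then ((h == 0) && ~~ a.1) + free (h + a.1 - a.2) w' else 0.

Definition npath (l h u : nat) : nat :=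
  count (fun w => balanced h w && (free h w == u)) (words l).

Lemma npath0 h u : npath 0 h u = (h == 0) && (u == 0).
Proof. by rewrite /npath /=; case: (h == 0); case: u. Qed.

Lemma count_words_succ l (P : pred (seq (bool * bool))) :
  count P (words l.+1) =
  count (fun w => P ((false, false) :: w)) (words l) +
  count (fun w => P ((true, false) :: w)) (words l) +
  count (fun w => P ((false, true) :: w)) (words l) +
  count (fun w => P ((true, true) :: w)) (words l).
Proof. by rewrite /= !count_cat !count_map /= addn0 !addnA. Qed.

(* First-letter recurrence at a positive height: no letter is free. *)
Lemma npath_succ_pos l h u :
  npath l.+1 h.+1 u = npath l h.+1 u + npath l h.+2 u + npath l h u + npath l h.+1 u.
Proof.
rewrite /npath count_words_succ /=.
by congr (_ + _ + _ + _); apply: eq_count => w;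
  rewrite ?addn0 ?subn0 ?addn1 ?subn1 ?add0n ?addnK.
Qed.

(* First-letter recurrence at height 0: (0, 0) is free, (0, 1) is forbidden. *)
Lemma npath_succ0 l u :
  npath l.+1 0 u = (if u is u'.+1 then npath l 0 u' else 0) + npath l 1 u + npath l 0 u.
Proof.
rewrite /npath count_words_succ /= count_pred0 addn0.
case: u => [|u].
  by rewrite (@eq_count _ _ xpred0) ?count_pred0 // => w /=; rewrite andbF.
by rewrite add0n; congr (_ + _ + _); apply: eq_count => w /=; rewrite ?add1n ?eqSS.
Qed.

Lemma npath_free_gt l h u : l < u -> npath l h u = 0.
Proof.
elim: l h u => [|l IH] h [|u] //= Hlu; first by rewrite npath0 andbF.
by case: h => [|h]; rewrite ?npath_succ0 ?npath_succ_pos !IH // ltnW.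
Qed.

Definition ndyck (l : nat) : nat := npath l 0 0.

(* Splitting a word at its last free letter: what follows it is a word of
   length y with no free letter. *)
Lemma npath_last_free l h u :
  npath l.+1 h u.+1 = \sum_(y < l.+1) npath (l - y) h u * ndyck y.
Proof.
elim: l h u => [|l IH] h u.
  rewrite big_ord_recr big_ord0 /= /ndyck npath0 muln1 add0n.
  case: h => [|h]; first by rewrite npath_succ0 !npath0 /=; case: u.
  by rewrite npath_succ_pos subn0 !npath0 /= !andbF.
rewrite [RHS]big_ord_recr /= subnn.
rewrite (eq_bigr (fun y : 'I_l.+1 => npath (l - y).+1 h u * ndyck y)); last first.
  by move=> y _; rewrite subSn // -ltnS.
case: h => [|h]; last first.
  rewrite npath_succ_pos !IH npath0 mul0n addn0.
  under eq_bigr do rewrite npath_succ_pos !mulnDl.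
  by rewrite !big_split.
case: u => [|u]; rewrite npath_succ0 !IH.
  under [in RHS]eq_bigr do rewrite npath_succ0 add0n mulnDl.
  by rewrite big_split /= npath0 mul1n /ndyck; lia.
under [in RHS]eq_bigr do rewrite npath_succ0 !mulnDl.
by rewrite !big_split /= npath0 mul0n addn0.
Qed.

Lemma bin_odd_mid l : 'C(l.*2.+1, l) = 'C(l.*2.+1, l.+1).
Proof.
rewrite -(@bin_sub l.*2.+1 l); last by rewrite -addnn; lia.
by congr 'C(_, _); rewrite -addnn; lia.
Qed.

Lemma npath_nofree_binom l h : npath l h 0 + 'C(l.*2, (l + h).+1) = 'C(l.*2, l + h).
Proof.
elim: l h => [|l IH] h; first by rewrite npath0 !bin0n; case: h.
rewrite doubleS; case: h => [|h].
  rewrite npath_succ0 add0n.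
  have := IH 1; have := IH 0.
  rewrite !addn0 !addn1 (binS l.*2.+1 l) bin_odd_mid !binS.
  lia.
rewrite npath_succ_pos.
have := IH h.+2; have := IH h.+1; have := IH h.
rewrite !addnS !addSn !binS.
lia.
Qed.

Lemma binom_ndyck l : 'C(l.*2, l) = l.+1 * ndyck l.
Proof.
have := npath_nofree_binom l 0; rewrite addn0 -/(ndyck l).
have := mul_bin_left l.*2 l.
rewrite -addnn addnK addnn.
lia.
Qed.

Lemma catalan_ndyck l : catalan l = ndyck l.
Proof. by rewrite /catalan binom_ndyck mulKn. Qed.

Lemma npath_weighted_binom l h :
  \sum_(u < l.+1) 2 ^ u * npath l h u = 'C(l.*2, l + h) + 'C(l.*2, (l + h).+1).
Proof.
have trunc k h' : \sum_(u < k.+2) 2 ^ u * npath k h' u = \sum_(u < k.+1) 2 ^ u * npath k h' u.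
  by rewrite big_ord_recr /= npath_free_gt // muln0 addn0.
elim: l h => [|l IH] h.
  by rewrite big_ord_recr big_ord0 /= npath0 !bin0n; case: h.
rewrite doubleS; case: h => [|h]; last first.
  under eq_bigr do rewrite npath_succ_pos !mulnDr.
  rewrite !big_split /= !trunc !IH !addnS !addSn !binS.
  lia.
rewrite (eq_bigr (fun u : 'I_l.+2 => 2 ^ u * (if val u is u'.+1 then npath l 0 u' else 0)
                     + 2 ^ u * npath l 1 u + 2 ^ u * npath l 0 u)); last first.
  by move=> u _; rewrite npath_succ0 !mulnDr; case: u => [[|u] Hu].
rewrite !big_split /= !trunc !IH big_ord_recl /= muln0 add0n.
under eq_bigr do rewrite /bump /= add1n expnS -mulnA.
rewrite -big_distrr /= IH !addn0 !addn1 (binS l.*2.+1 l) bin_odd_mid !binS.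
lia.
Qed.

Definition encode (lo len : nat) (D I : seq nat) : seq (bool * bool) :=
  [seq (x \in D, x \in I) | x <- iota lo len].

Definition covered (L I : seq nat) (x : nat) : bool :=
  has (fun p => (p.1 <= x) && (x <= p.2)) (zip L I).

Lemma covered_none L I x : all (fun y => x < y) L -> covered L I x = false.
Proof.
elim: L I => [|a L IH] [|i I] //= /andP [Ha HL].
by rewrite /covered /= -/(covered L I x) IH // orbF leqNgt Ha.
Qed.

Lemma covered_cons_gt a L i I x : i < x -> covered (a :: L) (i :: I) x = covered L I x.
Proof. by move=> H; rewrite /covered /= (leqNgt x i) H andbF. Qed.

Lemma split_first lo len D : sorted ltn D -> all (fun x => lo <= x < lo + len.+1) D ->
  exists b, exists2 D1, sorted ltn D1 && all (fun x => lo.+1 <= x < lo.+1 + len) D1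
    & D = if b then lo :: D1 else D1.
Proof.
case: D => [|d D'] sD aD; first by exists false, [::].
have gD' : all (ltn d) D' := order_path_min ltn_trans sD.
have sD' : sorted ltn D' := path_sorted sD.
move: aD => /= /andP [/andP [Hd1 Hd2] aD'].
have rangeD' : all (fun x => lo.+1 <= x < lo.+1 + len) D'.
  apply/allP => x Hx; move/allP: aD' => /(_ x Hx) /= H1.
  by move/allP: gD' => /(_ x Hx) /= H2; lia.
case: (ltngtP lo d) => Hld.
- exists false, (d :: D') => //.
  by rewrite sD /= rangeD' andbT; lia.
- by move: Hd1; rewrite leqNgt Hld.
- by exists true, D'; rewrite ?sD' ?rangeD' ?Hld.
Qed.

Lemma encode_cons lo len b c D1 I1 :
  all (fun x => lo < x) D1 -> all (fun x => lo < x) I1 ->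
  encode lo len.+1 (if b then lo :: D1 else D1) (if c then lo :: I1 else I1) =
  (b, c) :: encode lo.+1 len D1 I1.
Proof.
move=> gD gI; rewrite /encode /=.
have notin s : all (fun x => lo < x) s -> lo \in s = false.
  by move=> gs; apply/negbTE/negP => /(allP gs); rewrite ltnn.
congr ((_, _) :: _); first by case: b; rewrite ?inE ?eqxx ?notin.
  by case: c; rewrite ?inE ?eqxx ?notin.
apply/eq_in_map => x; rewrite mem_iota => /andP [Hx _].
have Hne : (x == lo) = false by apply/negbTE; rewrite neq_ltn Hx orbT.
by case: b; case: c; rewrite ?inE ?Hne.
Qed.

(* The left ends already read but not yet matched form a queue Q (all <= lo):
   a letter (b, c) at lo appends lo to Q if b, then pops the head if c.  The
   three lemmas below describe one such step. *)
Lemma queue_step_all2 lo Q D1 I1 (c : bool) :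
  all (fun p => p <= lo) Q -> all (fun x => lo < x) D1 ->
  all2 leq (Q ++ D1) (if c then lo :: I1 else I1) =
  (c <= size Q) && all2 leq ((if c then behead Q else Q) ++ D1) I1.
Proof.
case: c => //; case: Q => [|q Q] /=; last by case/andP=> ->.
by case: D1 => [|d D1] //= _ /andP [Hd _]; rewrite leqNgt Hd.
Qed.

Lemma queue_step_covered lo Q D1 I1 (c : bool) x : lo < x -> c <= size Q ->
  covered (Q ++ D1) (if c then lo :: I1 else I1) x =
  covered ((if c then behead Q else Q) ++ D1) I1 x.
Proof. by case: c; case: Q => [|q Q] //= Hx _; rewrite covered_cons_gt. Qed.

Lemma queue_covered_here lo Q D I :
  all (fun p => p <= lo) Q -> all (fun x => lo < x) D -> all (leq lo) I ->
  all2 leq (Q ++ D) I -> covered (Q ++ D) I lo = (Q != [::]).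
Proof.
case: Q => [|q Q] /= aQ aD aI; first by rewrite covered_none.
case: I aI => [|i I] //= /andP [Hi _] _.
by rewrite /covered /= (andP aQ).1 Hi.
Qed.

Lemma encode_reading len : forall lo Q D I, sorted ltn D -> sorted ltn I ->
  all (fun x => lo <= x < lo + len) D -> all (fun x => lo <= x < lo + len) I ->
  all (fun p => p <= lo) Q ->
  balanced (size Q) (encode lo len D I) = all2 leq (Q ++ D) I /\
  (all2 leq (Q ++ D) I ->
   free (size Q) (encode lo len D I) = count (predC (covered (Q ++ D) I)) (iota lo len)).
Proof.
elim: len => [|len IH] lo Q D I sD sI aD aI aQ.
  have nil s : all (fun x => lo <= x < lo + 0) s -> s = [::].
    by case: s => //= x s /andP [H _]; lia.
  rewrite (nil D aD) (nil I aI) cats0 /encode /=.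
  by split => //; case: Q aQ.
have [b [D1 /andP [sD1 aD1] ->]] := split_first sD aD.
have [c [I1 /andP [sI1 aI1] eI]] := split_first sI aI.
have gt_lo s : all (fun x => lo.+1 <= x < lo.+1 + len) s -> all (fun x => lo < x) s.
  by apply: sub_all => x /andP [].
rewrite eI encode_cons ?gt_lo //.
set Q1 := Q ++ nseq b lo; set Q2 := if c then behead Q1 else Q1.
have eQ : Q ++ (if b then lo :: D1 else D1) = Q1 ++ D1 by rewrite /Q1; case: (b); rewrite -?catA.
have aQ1 : all (fun p => p <= lo) Q1 by rewrite all_cat aQ all_nseq leqnn orbT.
have aQ2 : all (fun p => p <= lo.+1) Q2.
  apply: (sub_all (fun p => @leqW p lo)); rewrite /Q2; case: (c) => //.
  by case: (Q1) aQ1 => //= q s /andP [].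
have sQ1 : size Q1 = size Q + b by rewrite size_cat size_nseq.
have sQ2 : size Q2 = size Q + b - c by rewrite /Q2 -sQ1; case: (c); rewrite ?size_behead ?subn1 ?subn0.
have [IH1 IH2] := IH lo.+1 Q2 D1 I1 sD1 sI1 aD1 aI1 aQ2.
rewrite eQ /= -sQ2 IH1 queue_step_all2 ?gt_lo // sQ1; split => // /andP [Hc HQ2].
rewrite IH2 // queue_covered_here ?gt_lo //; last first.
- by rewrite queue_step_all2 ?gt_lo ?sQ1 ?Hc.
- by rewrite -eI; apply: (sub_all _ aI) => x /andP [].
congr (_ + _).
  by rewrite negbK -size_eq0 sQ1; case: (b); rewrite ?addn0 ?addn1 ?andbT ?andbF.
apply: eq_in_count => x; rewrite mem_iota => /andP [Hx _] /=.
by rewrite queue_step_covered ?sQ1.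
Qed.

Lemma mem_intervals i k x : size i = size k -> all (fun y => 0 < y) (diffs i k) ->
  (x \in flatten [seq iota (p.1 - p.2) p.2.+1 | p <- zip i k]) = covered (diffs i k) i x.
Proof.
elim: i k => [|a i IH] [|b k] // [Hs] /andP [Hab Ha].
have -> : flatten [seq iota (p.1 - p.2) p.2.+1 | p <- zip (a :: i) (b :: k)] =
  iota (a - b) b.+1 ++ flatten [seq iota (p.1 - p.2) p.2.+1 | p <- zip i k] by [].
rewrite mem_cat mem_iota IH //.
rewrite /covered /=; congr (_ || _).
move: Hab => /= Hab.
by have -> : a - b + b.+1 = a.+1 by lia.
Qed.

Lemma size_undup_count (T : eqType) (L s : seq T) : uniq s -> {subset L <= s} ->
  size (undup L) = count (mem L) s.
Proof.
move=> us sub; rewrite -size_filter; apply/perm_size/uniq_perm.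
- exact: undup_uniq.
- exact: filter_uniq.
by move=> x; rewrite mem_undup mem_filter /=; case Hx: (x \in L); rewrite // sub.
Qed.

Lemma covered_range L I N x : covered L I x -> all (leq 1) L -> all (fun y => y <= N) I ->
  x \in iota 1 N.
Proof.
rewrite /covered mem_iota add1n ltnS.
elim: L I => [|a L IH] [|i I] //= /orP [/andP [H1 H2]|H] /andP [Ha HL] /andP [Hi HI].
- by rewrite (leq_trans Ha H1) (leq_trans H2 Hi).
- exact: IH H HL HI.
Qed.

Lemma all_shift N s : all (fun x => 0 < x <= N) s -> all (fun x => 1 <= x < 1 + N) s.
Proof. by apply: sub_all => x; rewrite add1n ltnS. Qed.

Lemma weight_count N i k : inT N.+1 i k ->
  weight i k = count (covered (diffs i k) i) (iota 1 N).
Proof.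
case/and5P => /eqP Hs _ ai _ ad.
have pos : all (fun y => 0 < y) (diffs i k) by apply: sub_all ad => y /andP [].
rewrite /weight (size_undup_count (s := iota 1 N)) ?iota_uniq //.
  by apply: eq_count => x /=; rewrite mem_intervals.
move=> x; rewrite mem_intervals // => Hc.
apply: (covered_range Hc); first by apply: sub_all ad => y /andP [].
by apply: sub_all ai => y /andP [].
Qed.

Lemma weight_le N i k : inT N.+1 i k -> weight i k <= N.
Proof. by move/weight_count => ->; rewrite -[N in _ <= N](size_iota 1) count_size. Qed.

Lemma all2_diffs i k : size i = size k -> all2 leq (diffs i k) i.
Proof. by elim: i k => [|a i IH] [|b k] //= [Hs]; rewrite leq_subr IH. Qed.

Lemma size_diffs i k : size i = size k -> size (diffs i k) = size i.
Proof. by move=> H; rewrite size_map size_zip H minnn. Qed.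

Lemma count_opening N D I : sorted ltn D -> all (fun x => 1 <= x < 1 + N) D ->
  count fst (encode 1 N D I) = size D.
Proof.
move=> sD aD; rewrite /encode count_map (@eq_count _ _ (mem D)) //.
rewrite -size_undup_count ?iota_uniq ?undup_id ?(sorted_uniq ltn_trans ltnn sD) //.
by move=> x Hx; move/allP: aD => /(_ x Hx); rewrite mem_iota.
Qed.

Definition code N (i k : seq nat) : seq (bool * bool) := encode 1 N (diffs i k) i.

Lemma code_props N i k : inT N.+1 i k ->
  [/\ size (code N i k) = N, balanced 0 (code N i k),
      free 0 (code N i k) = N - weight i k & count fst (code N i k) = size i].
Proof.
move=> T; have := T; case/and5P => /eqP Hs si ai sd ad.
have [/= H1 H2] := encode_reading (Q := [::]) sd si (all_shift ad) (all_shift ai) isT.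
split; first by rewrite size_map size_iota.
- by rewrite /code H1 all2_diffs.
- rewrite /code H2 ?all2_diffs // (weight_count T).
  by have := count_predC (covered (diffs i k) i) (iota 1 N); rewrite size_iota; lia.
- by rewrite /code count_opening ?size_diffs //; apply: all_shift.
Qed.

Lemma diffsK D I : all2 leq D I -> diffs I (diffs I D) = D.
Proof.
elim: D I => [|b D IH] [|a I] //= /andP [Hb HA].
by rewrite /diffs /= subKn // -/(diffs _ _) IH.
Qed.

(* In T_{N+1}, each k_j is smaller than i_j (since i_j - k_j > 0), hence all
   entries are at most N. *)
Lemma inT_lt N i k : inT N.+1 i k -> all2 ltn k i.
Proof.
case/and5P => /eqP + _ _ _.
elim: i k => [|a i IH] [|b k] //= [Hs] /andP [/andP [Hab _] ad].
by rewrite IH // andbT -subn_gt0.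
Qed.

Lemma inT_le N i k : inT N.+1 i k ->
  all (fun x => x <= N) i /\ all (fun x => x <= N) k.
Proof.
move=> T; have aiN : all (fun x => x <= N) i.
  by case/and5P: T => _ _ ai _ _; apply: sub_all ai => x /andP [].
split => //; move: (inT_lt T) aiN => {T}.
elim: k i => [|b k IH] [|a i] //= /andP [Hba Hk] /andP [Ha aiN].
by rewrite (IH i) // andbT ltnW // (leq_trans Hba).
Qed.

Lemma encode_eq_mem N D I D' I' :
  all (fun y => 0 < y <= N) (D ++ I ++ D' ++ I') ->
  encode 1 N D I = encode 1 N D' I' -> D =i D' /\ I =i I'.
Proof.
rewrite !all_cat => /and4P [aD aI aD' aI'] /eq_in_map E.
have in_range s x : all (fun y => 0 < y <= N) s -> x \in s -> x \in iota 1 N.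
  by move=> /allP H /H /andP [H1 H2]; rewrite mem_iota H1 add1n ltnS.
split => x; case Hx: (x \in iota 1 N); try by have [] := E x Hx.
- by apply/idP/idP => H; [have := in_range _ _ aD H | have := in_range _ _ aD' H]; rewrite Hx.
- by apply/idP/idP => H; [have := in_range _ _ aI H | have := in_range _ _ aI' H]; rewrite Hx.
Qed.

(* The code is injective on T_{N+1}: sorted lists are determined by their
   elements, and k is recovered from i and i - k. *)
Lemma code_inj N i k i' k' : inT N.+1 i k -> inT N.+1 i' k' ->
  code N i k = code N i' k' -> i = i' /\ k = k'.
Proof.
move=> T T'; have lt := inT_lt T; have lt' := inT_lt T'.
case/and5P: T => _ si ai sd ad; case/and5P: T' => _ si' ai' sd' ad' E.
have [ED EI] : diffs i k =i diffs i' k' /\ i =i i'.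
  by apply: (@encode_eq_mem N) E; rewrite !all_cat ad ai ad' ai'.
have Ei : i = i' := irr_sorted_eq ltn_trans ltnn si si' EI.
have Ed : diffs i k = diffs i' k' := irr_sorted_eq ltn_trans ltnn sd sd' ED.
have leq_of_lt s t : all2 ltn s t -> all2 leq s t.
  by elim: s t => [|x s IH] [|y t] //= /andP [/ltnW -> /IH].
by rewrite -(diffsK (leq_of_lt _ _ lt)) -(diffsK (leq_of_lt _ _ lt')) Ed Ei.
Qed.

(* Every balanced word of length N is the code of an element of T_{N+1}: read
   off the left ends and right ends, and match them in order. *)
Lemma code_surj N w : size w = N -> balanced 0 w ->
  exists i k, inT N.+1 i k /\ code N i k = w.
Proof.
move=> Hw Hbal.
pose pick (f : bool * bool -> bool) := [seq x <- iota 1 N | f (nth (false, false) w x.-1)].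
have sorted_pick f : sorted ltn (pick f) := sorted_filter ltn_trans _ (iota_ltn_sorted 1 N).
have range_pick f : all (fun x => 0 < x <= N) (pick f).
  by apply/allP => x; rewrite mem_filter mem_iota => /andP [_ /andP [-> +]]; rewrite add1n ltnS.
set D := pick fst; set I := pick snd.
have Ew : encode 1 N D I = w.
  rewrite /encode -[w in RHS](mkseq_nth (false, false)) /mkseq Hw.
  have -> : iota 1 N = map (addn 1) (iota 0 N) by rewrite -iotaDl.
  rewrite -map_comp; apply/eq_in_map => x; rewrite mem_iota add0n => Hx /=.
  rewrite /D /I /pick !mem_filter mem_iota add1n ltnS ltnS Hx /= !andbT.
  by case: nth.
have [/= H1 _] := encode_reading (Q := [::]) (sorted_pick fst) (sorted_pick snd)
  (all_shift (range_pick fst)) (all_shift (range_pick snd)) isT.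
have match_DI : all2 leq D I by rewrite -H1 Ew.
exists I, (diffs I D); rewrite /code diffsK //; split => //.
rewrite /inT diffsK // sorted_pick range_pick sorted_pick range_pick !andbT.
by rewrite size_diffs //; move: match_DI; rewrite all2E => /andP [/eqP].
Qed.

Lemma sum_count_fibres (T : Type) (Q : pred T) (f : T -> nat) K s :
  all (fun x => f x < K) s ->
  \sum_(p < K) count (fun x => Q x && (f x == p)) s = count Q s.
Proof.
elim: s => [|a s IH] /=; first by rewrite big1.
case/andP => Ha Hs; rewrite big_split /= IH //; congr (_ + _).
rewrite (bigD1 (Ordinal Ha)) //= eqxx andbT big1 ?addn0 // => j /negbTE Hj.
case: eqP; rewrite ?andbF // => E.
by move: Hj; rewrite (_ : j = Ordinal Ha) ?eqxx //; apply: val_inj.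
Qed.

Lemma map_val_inord N s : all (fun x => x <= N) s -> map val (map (@inord N) s) = s.
Proof. by elim: s => [|a s IH] //= /andP [Ha Hs]; rewrite inordK ?IH. Qed.

Lemma card_T_size N m p : m <= N ->
  #|[pred t : p.-tuple 'I_N.+1 * p.-tuple 'I_N.+1 |
      inT N.+1 (map val t.1) (map val t.2) && (weight (map val t.1) (map val t.2) == m)]|
  = count (fun w => balanced 0 w && (free 0 w == N - m) && (count fst w == p)) (words N).
Proof.
move=> Hm.
pose cd (t : p.-tuple 'I_N.+1 * p.-tuple 'I_N.+1) := code N (map val t.1) (map val t.2).
rewrite cardE -size_filter -(size_map cd); apply/perm_size/uniq_perm.
- rewrite map_inj_in_uniq ?enum_uniq // => -[t1 t2] [t1' t2']; rewrite !mem_enum.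
  move=> /andP [T _] /andP [T' _] /(code_inj T T') [E1 E2].
  by congr pair; apply/val_inj/(inj_map val_inj).
- exact/filter_uniq/uniq_words.
move=> w; apply/mapP/idP.
- move=> [[t1 t2]]; rewrite mem_enum => /andP [T /eqP Hwt] ->.
  have [Hs Hbal Hfree Hopen] := code_props T.
  by rewrite mem_filter mem_words /cd Hs Hbal Hfree Hopen Hwt /= size_map size_tuple !eqxx.
rewrite mem_filter mem_words => /andP [/andP [/andP [Hbal /eqP Hfree] /eqP Hopen] /eqP Hs].
have [i [k [T Ew]]] := code_surj Hs Hbal.
have [_ _ Hfree' Hopen'] := code_props T.
have [bi bk] := inT_le T.
have szk : size k = size i by case/andP: T => /eqP.
have szi : size (map (@inord N) i) == p by rewrite size_map -Hopen' Ew Hopen.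
have szk' : size (map (@inord N) k) == p by rewrite size_map szk -Hopen' Ew Hopen.
exists (Tuple szi, Tuple szk'); rewrite ?mem_enum /= ?inE /= ?map_val_inord //.
  have := weight_le T; rewrite Ew Hfree in Hfree'.
  by rewrite T /= => Hle; apply/eqP; lia.
by rewrite /cd /= !map_val_inord.
Qed.

Lemma Z_npath N m : m <= N -> Z N.+1 m = npath N 0 (N - m).
Proof.
move=> Hm; rewrite /Z; under eq_bigr do rewrite card_T_size //.
rewrite (@sum_count_fibres _ (fun w => balanced 0 w && (free 0 w == N - m)) (count fst)) //.
by apply/allP => w; rewrite mem_words => /eqP <-; rewrite ltnS count_size.
Qed.

(* Part (1): splitting at the last free letter. *)
Lemma Z_recursion n m : m.+2 <= n ->
  Z n m = \sum_(n - m - 1 <= j < n) Z j (m + j + 1 - n) * Z (n - j) (n - j - 1).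
Proof.
case: n => [|[|l]] // Hm.
rewrite Z_npath; last by lia.
have -> : l.+1 - m = (l - m).+1 by lia.
rewrite npath_last_free big_rev_mkord.
have -> : l.+2 - (l.+2 - m - 1) = m.+1 by lia.
rewrite -(big_mkord xpredT (fun y => npath (l - y) 0 (l - m) * ndyck y)).
rewrite (big_cat_nat _ (n := m.+1)) //= [X in _ + X]big1_seq ?addn0; last first.
  move=> y; rewrite mem_index_iota => /andP [_ /andP [H1 H2]].
  by rewrite npath_free_gt ?mul0n //; lia.
rewrite big_mkord; apply: eq_bigr => y _; have Hy := ltn_ord y.
have -> : l.+2 - y.+1 = (l - y).+1 by lia.
have -> : l.+2 - (l - y).+1 - 1 = y by lia.
have -> : l.+2 - (l - y).+1 = y.+1 by lia.
have -> : m + (l - y).+1 + 1 - l.+2 = m - y by lia.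
rewrite !Z_npath ?subnn //; last by lia.
by have -> : l - y - (m - y) = l - m by lia.
Qed.

(* Part (2): top weight means no free letter. *)
Lemma Z_top N : Z N.+1 N = catalan N.
Proof. by rewrite Z_npath // subnn catalan_ndyck. Qed.

Lemma Z_weighted_sum N :
  \sum_(m < N.+1) 2 ^ (N.+1 - m) * Z N.+1 m = N.+2 * catalan N.+1.
Proof.
rewrite (reindex_inj rev_ord_inj) /=.
under eq_bigr => u _.
  have Hu := ltn_ord u.
  rewrite Z_npath; last by lia.
  have -> : N.+1 - (N - u) = u.+1 by lia.
  have -> : N - (N - u) = u by lia.
  rewrite expnS -mulnA.
  over.
rewrite -big_distrr /= npath_weighted_binom addn0 catalan_ndyck -binom_ndyck doubleS.
rewrite (binS N.*2.+1 N) bin_odd_mid !binS.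
lia.
Qed.

Theorem mainTheorem18 (n : nat) (hn : 1 <= n) :
  (forall m : nat, m.+2 <= n ->
     Z n m = \sum_(n - m - 1 <= j < n) Z j (m + j + 1 - n) * Z (n - j) (n - j - 1))
  /\ Z n (n - 1) = catalan (n - 1)
  /\ \sum_(m < n) 2 ^ (n - m) * Z n m = n.+1 * catalan n.
Proof.
case: n hn => [//|N] _.
split; first exact: Z_recursion.
by rewrite subn1 Z_top Z_weighted_sum.
Qed.
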